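(* Let $\alpha,\beta$ be compositions with $\beta\subseteq\alpha$ such that the skew diagram $\alpha/\beta$ is connected. Then the poset $\mathrm{SET}(\alpha/\beta)$ has a unique minimal element, namely $S^{\mathrm{col}}_{\alpha/\beta}$. Equivalently, $\mathrm{SET}(\alpha/\beta)$ coincides with the interval $[S^{\mathrm{col}}_{\alpha/\beta},S^{\mathrm{row}}_{\alpha/\beta}]$ in the poset $\mathrm{SIT}(\alpha/\beta)$, and its rank is $\binom{|\alpha/\beta|}{2}-\sum_{c\in\alpha/\beta}\mathrm{ls}(c)$.
   Context: A composition $\alpha=(\alpha_1,\ldots,\alpha_k)$ is a finite sequence of positive integers, $|\alpha|=\sum\alpha_i$. Its diagram has rows numbered from the bottom (row 1 lowest), row $i$ consisting of the cells in columns $1,\ldots,\alpha_i$. For $\beta\subseteq\alpha$ (i.e. $\ell(\beta)\le\ell(\alpha)$, $\beta_j\le\alpha_j$), the skew diagram $\alpha/\beta$ consists of the cells in row $i$, column $j$ with $\beta_i<j\le\alpha_i$ ($\beta_i=0$ for $i>\ell(\beta)$); $n=|\alpha/\beta|=|\alpha|-|\beta|$. $\alpha/\beta$ is reduced if it has no empty rows; it is connected if, after deleting its empty rows, for every pair of consecutive rows there is a column containing a cell of each row of the pair. $\mathrm{SIT}(\alpha/\beta)$: bijective fillings of $\alpha/\beta$ with $1,\ldots,n$ with rows increasing left to right and column-1 entries increasing bottom to top. $\mathrm{SET}(\alpha/\beta)\subseteq\mathrm{SIT}(\alpha/\beta)$: fillings with all rows increasing left to right and all columns increasing bottom to top. For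 $1\le i\le n-1$, $\pi_i(T)=T$ if $i+1$ is in a strictly higher row than $i$, $\pi_i(T)=s_i(T)$ (swap $i$ and $i+1$) if $i+1$ is in a strictly lower row than $i$, and $\pi_i(T)=0$ otherwise. The poset order on $\mathrm{SIT}(\alpha/\beta)$: $T\le T'$ iff $T'$ is obtained from $T$ by a sequence of operators $\pi_i$ (all intermediate results nonzero); this poset is graded with rank function given by the number of inversions, and $\mathrm{SET}(\alpha/\beta)$ has the induced order. $S^{\mathrm{row}}_{\alpha/\beta}$ is the tableau filled with $1,\ldots,n$ consecutively along rows left to right, starting from the bottom row and moving up; $S^{\mathrm{col}}_{\alpha/\beta}$ is the tableau filled consecutively along columns bottom to top, starting from the leftmost column and moving right. For a cell $c$ of $\alpha/\beta$, $\mathrm{ls}(c)$ is the number of cells of $\alpha/\beta$ other than $c$ that are weakly southwest of $c$ (weakly below and weakly left). *)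

From mathcomp Require Import all_boot.
Set Implicit Arguments. Unset Strict Implicit. Unset Printing Implicit Defensive.

(* Conventions: a composition is a seq nat of positive parts; rows and
   columns are 0-indexed here (Rocq row i = paper row i+1, Rocq column j =
   paper column j+1).  A cell is a pair (row, column).  nth 0 b i = 0 for
   i >= size b, as in the paper (beta_i = 0 for i > l(beta)). *)

Definition cell := (nat * nat)%type.

Definition is_comp (a : seq nat) : bool := all (fun x => 0 < x) a.

Definition comp_sub (b a : seq nat) : bool :=
  (size b <= size a) && all (fun j => nth 0 b j <= nth 0 a j) (iota 0 (size b)).

(* the cells of alpha/beta, listed row by row from the bottom row, left to right *)
Definition cells (a b : seq nat) : seq cell :=
  flatten [seq [seq (i, j) | j <- iota (nth 0 b i) (nth 0 a i - nth 0 b i)]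
          | i <- iota 0 (size a)].

Definition nonempty_row (a b : seq nat) (i : nat) : bool :=
  (i < size a) && (nth 0 b i < nth 0 a i).

(* connected: consecutive nonempty rows (empty rows deleted) share a column *)
Definition skew_connected (a b : seq nat) : Prop :=
  forall i k, i < k -> nonempty_row a b i -> nonempty_row a b k ->
    (forall l, i < l < k -> ~~ nonempty_row a b l) ->
    maxn (nth 0 b i) (nth 0 b k) < minn (nth 0 a i) (nth 0 a k).

(* A filling T : seq nat lists the entries of the cells in the order of [cells a b]. *)
Definition entry (a b : seq nat) (T : seq nat) (c : cell) : nat :=
  nth 0 T (index c (cells a b)).

Definition is_SIT (a b : seq nat) (T : seq nat) : Prop :=
  [/\ perm_eq T (iota 1 (size (cells a b))),
      (forall c d, c \in cells a b -> d \in cells a b -> c.1 = d.1 -> c.2 < d.2 ->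
         entry a b T c < entry a b T d)
    & (forall c d, c \in cells a b -> d \in cells a b -> c.2 = 0 -> d.2 = 0 ->
         c.1 < d.1 -> entry a b T c < entry a b T d)].

Definition is_SET (a b : seq nat) (T : seq nat) : Prop :=
  [/\ perm_eq T (iota 1 (size (cells a b))),
      (forall c d, c \in cells a b -> d \in cells a b -> c.1 = d.1 -> c.2 < d.2 ->
         entry a b T c < entry a b T d)
    & (forall c d, c \in cells a b -> d \in cells a b -> c.2 = d.2 ->
         c.1 < d.1 -> entry a b T c < entry a b T d)].

Definition row_of (a b : seq nat) (T : seq nat) (v : nat) : nat :=
  (nth (0, 0) (cells a b) (index v T)).1.

Definition swap_vals (i : nat) (T : seq nat) : seq nat :=
  map (fun x => if x == i then i.+1 else if x == i.+1 then i else x) T.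

(* the 0-Hecke operator pi_i; None stands for 0 *)
Definition pi_op (a b : seq nat) (i : nat) (T : seq nat) : option (seq nat) :=
  if row_of a b T i < row_of a b T i.+1 then Some T
  else if row_of a b T i.+1 < row_of a b T i then Some (swap_vals i T)
  else None.

Inductive hecke_le (a b : seq nat) : seq nat -> seq nat -> Prop :=
  | hle_refl T : hecke_le a b T T
  | hle_step T T1 T2 i : 1 <= i -> i < size (cells a b) ->
      pi_op a b i T = Some T1 -> hecke_le a b T1 T2 -> hecke_le a b T T2.

Definition hecke_lt (a b : seq nat) (T T' : seq nat) : Prop :=
  hecke_le a b T T' /\ T <> T'.

Definition Srow (a b : seq nat) : seq nat := iota 1 (size (cells a b)).

Definition col_cells (a b : seq nat) : seq cell :=
  [seq c <- [seq (i, j) | j <- iota 0 (foldr maxn 0 a), i <- iota 0 (size a)]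
   | c \in cells a b].

Definition Scol (a b : seq nat) : seq nat :=
  [seq (index c (col_cells a b)).+1 | c <- cells a b].

Definition ls (a b : seq nat) (c : cell) : nat :=
  count (fun d => (d != c) && (d.1 <= c.1) && (d.2 <= c.2)) (cells a b).

Definition is_minimal (P : seq nat -> Prop) (le : seq nat -> seq nat -> Prop)
  (T : seq nat) : Prop :=
  P T /\ forall T', P T' -> le T' T -> T' = T.

Definition SET_chain (a b : seq nat) (s : seq (seq nat)) : Prop :=
  (forall k, k < size s -> is_SET a b (nth [::] s k)) /\
  (forall k, k.+1 < size s -> hecke_lt a b (nth [::] s k) (nth [::] s k.+1)).

Definition SET_rank (a b : seq nat) (r : nat) : Prop :=
  (exists s, SET_chain a b s /\ size s = r.+1) /\
  (forall s, SET_chain a b s -> size s <= r.+1).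

From mathcomp Require Import all_boot zify.
Set Implicit Arguments. Unset Strict Implicit. Unset Printing Implicit Defensive.

(* The inversion number of a filling T counts the pairs of cells c, d with c in a
   strictly lower row than d but T(c) > T(d).  A nontrivial pi_i swaps i and i+1
   when i+1 lies strictly lower, so it removes exactly one inversion: the order is
   graded by inversions, and hecke_le is antisymmetric.

   In a connected shape a standard extended tableau increases strictly towards the
   north-east, since any cell can be reached from a cell weakly south-west of it by
   moving right along rows and up along shared columns.  Hence if each i lying
   in a lower row than i+1 is in the same column as i+1, the columns of 1, ..., n
   weakly increase and T = S^col.  Otherwise swapping such i and i+1 gives a SET T' with pi_i T' = T
   and one more inversion, so induction yields S^col <= T.  Dually, a SET with a
   descent moves up by a pi_i, and one without descents has no inversions and is
   S^row; this gives chains of length inversions(T) from T to S^row, so the rank is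
   inversions(S^col).  Finally, a pair of distinct cells is either in strict
   north-west/south-east position, an inversion of S^col, or comparable in the
   south-west order, counted by ls; so inversions(S^col) + sum ls = C(n, 2). *)

Definition row_major (c d : cell) : bool :=
  (c.1 < d.1) || (c.1 == d.1) && (c.2 < d.2).

Definition col_major (c d : cell) : bool := row_major (c.2, c.1) (d.2, d.1).

Lemma row_major_irr : irreflexive row_major.
Proof. by move=> c; rewrite /row_major !ltnn andbF. Qed.

Lemma row_major_asym c d : row_major c d -> ~~ row_major d c.
Proof. rewrite /row_major; lia. Qed.

Lemma col_major_irr : irreflexive col_major.
Proof. by move=> c; apply: row_major_irr. Qed.

Lemma col_major_asym c d : col_major c d -> ~~ col_major d c.
Proof. exact: row_major_asym. Qed.

Lemma pairwise_index_ltn (T : eqType) (r : rel T) (s : seq T) :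
  irreflexive r -> (forall x y, r x y -> ~~ r y x) -> pairwise r s ->
  {in s &, forall x y, (index x s < index y s) = r x y}.
Proof.
move=> r_irr r_asym r_s x y xs ys; move/(pairwiseP x): r_s => r_nth.
have xi : index x s < size s by rewrite index_mem.
have yi : index y s < size s by rewrite index_mem.
case: ltngtP => [lt_xy|lt_yx|eq_xy].
- by have := r_nth _ _ xi yi lt_xy; rewrite !nth_index.
- by have := r_nth _ _ yi xi lt_yx; rewrite !nth_index // => /r_asym/negbTE.
- by rewrite -(nth_index x xs) eq_xy nth_index // r_irr.
Qed.

Lemma pairwise_ltn_iota m n : pairwise ltn (iota m n).
Proof. by rewrite -sorted_pairwise ?iota_ltn_sorted //; exact: ltn_trans. Qed.

Lemma pairwise_row_major_allpairs (s : seq nat) (t : nat -> seq nat) :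
  pairwise ltn s -> (forall i, pairwise ltn (t i)) ->
  pairwise row_major [seq (i, j) | i <- s, j <- t i].
Proof.
elim: s => [|i s IHs] //= /andP[lt_i_s lt_s] lt_t.
rewrite pairwise_cat IHs // andbT pairwise_map; apply/andP; split.
  apply/allrelP => _ _ /mapP[j _ ->] /allpairsPdep[i' [j' [i's _ ->]]].
  by apply/orP; left; apply: (allP lt_i_s).
by apply: sub_pairwise (lt_t i) => j j' lt_jj'; apply/orP; right; rewrite /= eqxx.
Qed.

Lemma sorted_perm_iota (s : seq nat) m n :
  sorted ltn s -> perm_eq s (iota m n) -> s = iota m n.
Proof.
move=> s_sorted /perm_mem s_iota.
exact: (irr_sorted_eq ltn_trans ltnn) s_sorted (iota_ltn_sorted m n) s_iota.
Qed.

Definition swap_val (i x : nat) : nat :=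
  if x == i then i.+1 else if x == i.+1 then i else x.

Lemma swap_valK i : involutive (swap_val i).
Proof. by move=> x; rewrite /swap_val; repeat case: eqP => //=; lia. Qed.

Lemma swap_val_l i : swap_val i i = i.+1.
Proof. by rewrite /swap_val eqxx. Qed.

Lemma swap_val_r i : swap_val i i.+1 = i.
Proof. by rewrite /swap_val eqn_leq ltnn eqxx. Qed.

Lemma swap_val_inj i : injective (swap_val i).
Proof. exact: inv_inj (swap_valK i). Qed.

Lemma swap_valsK i : involutive (swap_vals i).
Proof. by move=> T; rewrite /swap_vals -map_comp (eq_map (swap_valK i)) map_id. Qed.

Lemma ltn_swap_val i x y : (x, y) != (i, i.+1) -> (y, x) != (i, i.+1) ->
  (swap_val i x < swap_val i y) = (x < y).
Proof. by rewrite !xpair_eqE /swap_val; repeat case: eqP => //=; lia. Qed.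

Lemma swap_vals_perm_iota i n T : 0 < i < n ->
  perm_eq T (iota 1 n) -> perm_eq (swap_vals i T) (iota 1 n).
Proof.
move=> i_range T_perm; apply: uniq_perm.
- by rewrite map_inj_uniq ?(perm_uniq T_perm) ?iota_uniq //; exact: swap_val_inj.
- exact: iota_uniq.
move=> v; rewrite -{1}(swap_valK i v) mem_map ?(perm_mem T_perm) ?mem_iota;
  last exact: swap_val_inj.
by rewrite /swap_val; repeat case: eqP => //=; lia.
Qed.

Lemma sum_bool_count (T : Type) (s : seq T) (a : pred T) :
  \sum_(x <- s) a x = count a s.
Proof. by rewrite -sum1_count [RHS]big_mkcond. Qed.

Section PairSums.

Variables (T : eqType) (s : seq T).
Hypothesis s_uniq : uniq s.

Lemma sum_pairs_succ (P Q : T -> T -> bool) x y :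
  x \in s -> y \in s -> P x y -> ~~ Q x y ->
  {in s &, forall c d, (c, d) != (x, y) -> P c d = Q c d} ->
  \sum_(c <- s) \sum_(d <- s) P c d = (\sum_(c <- s) \sum_(d <- s) Q c d).+1.
Proof.
move=> xs ys Pxy nQxy PQ.
have row_x : \sum_(d <- s | d != y) P x d = \sum_(d <- s | d != y) Q x d.
  rewrite big_seq_cond [RHS]big_seq_cond; apply: eq_bigr => d /andP[ds neq_dy].
  by rewrite PQ // xpair_eqE negb_and neq_dy orbT.
have other_rows : \sum_(c <- s | c != x) \sum_(d <- s) P c d
                = \sum_(c <- s | c != x) \sum_(d <- s) Q c d.
  rewrite big_seq_cond [RHS]big_seq_cond; apply: eq_bigr => c /andP[cs neq_cx].
  by apply: eq_big_seq => d ds; rewrite PQ // xpair_eqE negb_and neq_cx.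
rewrite (bigD1_seq x) //= [X in _ = X.+1](bigD1_seq x) //= (bigD1_seq y) //=.
rewrite [\sum_(d <- s) Q x d](bigD1_seq y) //= row_x other_rows Pxy (negbTE nQxy).
by rewrite add1n add0n addSn.
Qed.

Lemma sum_pairs_neq :
  \sum_(c <- s) \sum_(d <- s) (c != d : nat) = size s * (size s).-1.
Proof.
have count_neq c : c \in s -> \sum_(d <- s) (c != d : nat) = (size s).-1.
  move=> cs; rewrite sum_bool_count -(count_predC (pred1 c)).
  by rewrite (count_uniq_mem _ s_uniq) cs add1n; apply: eq_count => d; rewrite /= eq_sym.
rewrite (eq_big_seq (fun=> (size s).-1)); last by move=> c /count_neq.
by rewrite big_const_seq count_predT iter_addn_0 mulnC.
Qed.

End PairSums.

Section Cells.

Variables a b : seq nat.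

Local Notation n := (size (cells a b)).

Lemma mem_cells c :
  (c \in cells a b) = (c.1 < size a) && (nth 0 b c.1 <= c.2 < nth 0 a c.1).
Proof.
case: c => i j; apply/allpairsPdep/idP => [[i' [j' [+ + [-> ->]]]]|cell_ij].
  by rewrite !mem_iota /=; lia.
by move: cell_ij => /= cell_ij; exists i, j; rewrite !mem_iota /=; split => //; lia.
Qed.

Lemma uniq_cells : uniq (cells a b).
Proof.
apply: allpairs_uniq_dep => [|i _|[i j] [i' j'] _ _ /= [-> ->]] //; exact: iota_uniq.
Qed.

Lemma pairwise_row_major_cells : pairwise row_major (cells a b).
Proof. by apply: pairwise_row_major_allpairs => *; exact: pairwise_ltn_iota. Qed.

Lemma mem_col_cells c : (c \in col_cells a b) = (c \in cells a b).
Proof.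
rewrite mem_filter andb_idr // mem_cells => /and3P[c1_lt b_le_c2 c2_lt].
have max_a : nth 0 a c.1 <= foldr maxn 0 a.
  elim: (a) (c.1) {c1_lt b_le_c2 c2_lt} => [|x s IHs] [|i] //=; first exact: leq_maxl.
  exact: leq_trans (IHs i) (leq_maxr _ _).
apply/allpairsPdep; exists c.2, c.1; rewrite !mem_iota /=; split.
- exact: leq_trans c2_lt max_a.
- exact: c1_lt.
- by case: c {c1_lt b_le_c2 c2_lt max_a}.
Qed.

Lemma uniq_col_cells : uniq (col_cells a b).
Proof.
apply/filter_uniq/allpairs_uniq_dep => [|j _|[i j] [i' j'] _ _ /= [-> ->]] //;
  exact: iota_uniq.
Qed.

Lemma perm_col_cells : perm_eq (col_cells a b) (cells a b).
Proof. by apply: uniq_perm; [exact: uniq_col_cells|exact: uniq_cells|exact: mem_col_cells]. Qed.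

Lemma pairwise_col_major_col_cells : pairwise col_major (col_cells a b).
Proof.
apply: pairwise_filter.
rewrite (_ : [seq _ | j <- _, i <- _] = map (fun c => (c.2, c.1))
  [seq (j, i) | j <- iota 0 (foldr maxn 0 a), i <- iota 0 (size a)]).
  by rewrite pairwise_map; apply: pairwise_row_major_allpairs => *; exact: pairwise_ltn_iota.
by rewrite map_allpairs.
Qed.

Lemma entry_Scol c :
  c \in cells a b -> entry a b (Scol a b) c = (index c (col_cells a b)).+1.
Proof. by move=> c_in; rewrite /entry /Scol (nth_map (0, 0)) ?index_mem ?nth_index. Qed.

Lemma ltn_entry_Scol c d : c \in cells a b -> d \in cells a b ->
  (entry a b (Scol a b) c < entry a b (Scol a b) d) = col_major c d.
Proof.
move=> c_in d_in; rewrite !entry_Scol // ltnS.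
by apply: pairwise_index_ltn; rewrite ?mem_col_cells //;
  [exact: col_major_irr|exact: col_major_asym|exact: pairwise_col_major_col_cells].
Qed.

Lemma perm_Scol : perm_eq (Scol a b) (iota 1 n).
Proof.
have cells_col : perm_eq (cells a b) (col_cells a b) by rewrite perm_sym perm_col_cells.
apply: perm_trans (perm_map _ cells_col) _.
rewrite -(perm_size perm_col_cells).
suff -> : [seq (index c (col_cells a b)).+1 | c <- col_cells a b]
          = iota 1 (size (col_cells a b)) by [].
apply: (@eq_from_nth _ 0) => [|k]; rewrite size_map; first by rewrite size_iota.
by move=> k_lt; rewrite (nth_map (0, 0)) // nth_iota // index_uniq // uniq_col_cells.
Qed.

End Cells.

Section Fillings.

Variables a b : seq nat.

Local Notation n := (size (cells a b)).
Local Notation entry := (entry a b).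
Local Notation pi_op := (pi_op a b).
Local Notation hecke_le := (hecke_le a b).

Definition cell_of (T : seq nat) (v : nat) : cell := nth (0, 0) (cells a b) (index v T).

Definition inversions (T : seq nat) : nat :=
  \sum_(c <- cells a b) \sum_(d <- cells a b) ((c.1 < d.1) && (entry T d < entry T c)).

Definition descent (T : seq nat) (i : nat) : bool := (cell_of T i.+1).1 < (cell_of T i).1.

Lemma inversions_leq T : inversions T <= n * n.
Proof.
apply: (@leq_trans (\sum_(c <- cells a b) \sum_(d <- cells a b) 1)).
  by do 2!(apply: leq_sum => ? _); case: (_ && _).
by rewrite sum1_size big_const_seq count_predT iter_addn_0.
Qed.

Lemma cell_of_swap i T v : cell_of (swap_vals i T) v = cell_of T (swap_val i v).
Proof. by rewrite /cell_of -{1}(swap_valK i v) index_map //; exact: swap_val_inj. Qed.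

Section Filling.

Variable T : seq nat.
Hypothesis T_perm : perm_eq T (iota 1 n).

Lemma size_filling : size T = n.
Proof. by rewrite (perm_size T_perm) size_iota. Qed.

Lemma mem_filling v : (v \in T) = (0 < v <= n).
Proof. by rewrite (perm_mem T_perm) mem_iota; lia. Qed.

Lemma uniq_filling : uniq T.
Proof. by rewrite (perm_uniq T_perm) iota_uniq. Qed.

Lemma entry_range c : c \in cells a b -> 0 < entry T c <= n.
Proof. by move=> c_in; rewrite -mem_filling mem_nth // size_filling index_mem. Qed.

Lemma cell_of_in v : 0 < v <= n -> cell_of T v \in cells a b.
Proof. by rewrite -mem_filling => v_in; rewrite mem_nth // -size_filling index_mem. Qed.

Lemma entry_cell_of v : 0 < v <= n -> entry T (cell_of T v) = v.
Proof.
rewrite -mem_filling => v_in.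
by rewrite /entry /cell_of index_uniq ?nth_index ?uniq_cells // -size_filling index_mem.
Qed.

Lemma cell_of_entry c : c \in cells a b -> cell_of T (entry T c) = c.
Proof.
move=> c_in; rewrite /cell_of /entry index_uniq ?nth_index ?uniq_filling //.
by rewrite size_filling index_mem.
Qed.

Lemma entry_inj : {in cells a b &, injective (entry T)}.
Proof. by move=> c d c_in d_in eq_cd; rewrite -(cell_of_entry c_in) eq_cd cell_of_entry. Qed.

Lemma map_entry_cells : map (entry T) (cells a b) = T.
Proof.
apply: (@eq_from_nth _ 0) => [|k]; rewrite size_map ?size_filling // => k_lt.
by rewrite (nth_map (0, 0)) // /entry index_uniq // uniq_cells.
Qed.

Lemma map_entry_pairwise (s : seq cell) (r : rel cell) :
  perm_eq s (cells a b) -> pairwise r s ->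
  {in cells a b &, forall c d, r c d -> entry T c < entry T d} ->
  map (entry T) s = iota 1 n.
Proof.
move=> s_cells r_s r_entry; apply: sorted_perm_iota.
  rewrite sorted_pairwise; last exact: ltn_trans.
  rewrite pairwise_map; apply: (sub_in_pairwise r_entry) r_s.
  by apply/allP => c; rewrite (perm_mem s_cells).
by apply: perm_trans (perm_map _ s_cells) _; rewrite map_entry_cells.
Qed.

Lemma filling_eq_Srow :
  {in cells a b &, forall c d, row_major c d -> entry T c < entry T d} -> T = Srow a b.
Proof.
move=> lt_entry; rewrite -{1}map_entry_cells /Srow.
exact: map_entry_pairwise (perm_refl _) (pairwise_row_major_cells a b) lt_entry.
Qed.

Lemma filling_eq_Scol :
  {in cells a b &, forall c d, col_major c d -> entry T c < entry T d} -> T = Scol a b.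
Proof.
move=> lt_entry.
have col_T :=
  map_entry_pairwise (perm_col_cells a b) (pairwise_col_major_col_cells a b) lt_entry.
rewrite -{1}map_entry_cells /Scol; apply/eq_in_map => c c_in.
rewrite -mem_col_cells in c_in.
have c_idx : index c (col_cells a b) < n.
  by rewrite -(perm_size (perm_col_cells a b)) index_mem.
by rewrite -{1}(nth_index (0, 0) c_in) -(nth_map _ 0) ?col_T ?nth_iota // index_mem.
Qed.

Lemma entry_swap i c : c \in cells a b -> entry (swap_vals i T) c = swap_val i (entry T c).
Proof. by move=> c_in; rewrite /entry (nth_map 0) // size_filling index_mem. Qed.

Lemma inversions_swap i : 0 < i < n -> descent T i ->
  inversions T = (inversions (swap_vals i T)).+1.
Proof.
move=> i_range desc.
have i_val : 0 < i <= n by lia.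
have i1_val : 0 < i.+1 <= n by lia.
have at_cells c d : c \in cells a b -> d \in cells a b ->
    (entry T c, entry T d) = (i, i.+1) -> (c, d) = (cell_of T i, cell_of T i.+1).
  by move=> c_in d_in [<- <-]; rewrite !cell_of_entry.
apply: (sum_pairs_succ (uniq_cells a b) (cell_of_in i1_val) (cell_of_in i_val)).
- by rewrite !entry_cell_of // ltnSn andbT.
- rewrite !entry_swap ?cell_of_in // !entry_cell_of // swap_val_l swap_val_r.
  by rewrite [i.+1 < i]ltnNge leqnSn andbF.
move=> c d c_in d_in cd_neq; case lt_cd: (c.1 < d.1) => //=.
rewrite !entry_swap // ltn_swap_val //.
  by apply/eqP => /(at_cells _ _ d_in c_in) [eq_d eq_c]; rewrite eq_c eq_d eqxx in cd_neq.
apply/eqP => /(at_cells _ _ c_in d_in) [eq_c eq_d].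
by move: lt_cd desc; rewrite eq_c eq_d /descent; lia.
Qed.

End Filling.

Lemma pi_opP i T T' :
  pi_op i T = Some T' -> T' = T \/ descent T i /\ T' = swap_vals i T.
Proof.
rewrite /pi_op /descent /cell_of; case: ltnP => _; first by case=> ->; left.
by case: ltnP => // desc [<-]; right.
Qed.

Lemma pi_op_descent i T : descent T i -> pi_op i T = Some (swap_vals i T).
Proof. by rewrite /descent /pi_op /cell_of => desc; rewrite ltnNge (ltnW desc) /= desc. Qed.

Lemma hecke_le_trans T1 T2 T3 : hecke_le T1 T2 -> hecke_le T2 T3 -> hecke_le T1 T3.
Proof.
elim=> // T T' T'' i i_pos i_lt pi_T _ IH le_T''_T3.
exact: hle_step i_pos i_lt pi_T (IH le_T''_T3).
Qed.

Lemma hecke_le_inversions T T' : hecke_le T T' -> perm_eq T (iota 1 n) ->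
  perm_eq T' (iota 1 n) /\ (T' = T \/ inversions T' < inversions T).
Proof.
elim=> [|{}T T1 T2 i i_pos i_lt pi_T _ IH] T_perm; first by split => //; left.
case/pi_opP: pi_T => [eq_T1 | [desc eq_T1]]; first by rewrite eq_T1 in IH; exact: IH.
have i_range : 0 < i < n by rewrite i_pos.
have T1_perm : perm_eq T1 (iota 1 n) by rewrite eq_T1 swap_vals_perm_iota.
have [T2_perm le_T2] := IH T1_perm.
split => //; right; rewrite (inversions_swap T_perm i_range desc) -eq_T1.
by case: le_T2 => [->|]; lia.
Qed.

Lemma hecke_le_anti T T' : perm_eq T (iota 1 n) ->
  hecke_le T T' -> hecke_le T' T -> T = T'.
Proof.
move=> T_perm le_TT' le_T'T.
have [T'_perm [-> // | lt_T'T]] := hecke_le_inversions le_TT' T_perm.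
by have [_ [-> // | ]] := hecke_le_inversions le_T'T T'_perm; lia.
Qed.

End Fillings.

Section StandardExtendedTableaux.

Variables a b : seq nat.

Local Notation n := (size (cells a b)).
Local Notation entry := (entry a b).
Local Notation pi_op := (pi_op a b).
Local Notation hecke_le := (hecke_le a b).
Local Notation is_SET := (is_SET a b).
Local Notation cell_of := (cell_of a b).
Local Notation inversions := (inversions a b).
Local Notation descent := (descent a b).

Lemma SET_perm T : is_SET T -> perm_eq T (iota 1 n).
Proof. by case. Qed.

Lemma SET_SIT T : is_SET T -> is_SIT a b T.
Proof.
case=> T_perm T_rows T_cols; split=> // c d c_in d_in c_col0 d_col0.
by apply: T_cols; rewrite ?c_col0 ?d_col0.
Qed.

Lemma SET_Scol : is_SET (Scol a b).
Proof.
split; first exact: perm_Scol.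
- move=> c d c_in d_in eq_row lt_col.
  by rewrite ltn_entry_Scol // /col_major /row_major lt_col.
- move=> c d c_in d_in eq_col lt_row.
  by rewrite ltn_entry_Scol // /col_major /row_major /= eq_col eqxx lt_row orbT.
Qed.

Lemma SET_swap T i : is_SET T -> 0 < i < n ->
  (cell_of T i).1 != (cell_of T i.+1).1 -> (cell_of T i).2 != (cell_of T i.+1).2 ->
  is_SET (swap_vals i T).
Proof.
case=> T_perm T_rows T_cols i_range row_neq col_neq.
have lt_swap c d : c \in cells a b -> d \in cells a b -> entry T c < entry T d ->
    (c, d) != (cell_of T i, cell_of T i.+1) ->
    entry (swap_vals i T) c < entry (swap_vals i T) d.
  move=> c_in d_in lt_cd cd_neq; rewrite !(entry_swap T_perm) // ltn_swap_val //.
    by apply: contra cd_neq => /eqP[<- <-]; rewrite !(cell_of_entry T_perm).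
  by apply/eqP => -[eq_d eq_c]; move: lt_cd; rewrite eq_c eq_d; lia.
split; first exact: swap_vals_perm_iota.
- move=> c d c_in d_in eq_row lt_col; apply: lt_swap (T_rows _ _ _ _ _ _) _ => //.
  by apply: contra row_neq => /eqP[<- <-]; rewrite eq_row.
- move=> c d c_in d_in eq_col lt_row; apply: lt_swap (T_cols _ _ _ _ _ _) _ => //.
  by apply: contra col_neq => /eqP[<- <-]; rewrite eq_col.
Qed.

Lemma pi_op_SET T T' i : is_SET T -> 0 < i < n -> pi_op i T = Some T' -> is_SET T'.
Proof.
move=> T_SET i_range /pi_opP[-> // | [desc ->]].
have [T_perm _ T_cols] := T_SET.
have i_val : 0 < i <= n by lia.
have i1_val : 0 < i.+1 <= n by lia.
apply: SET_swap => //; first by rewrite neq_ltn; apply/orP; right; exact: desc.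
apply/eqP => eq_col.
have := T_cols _ _ (cell_of_in T_perm i1_val) (cell_of_in T_perm i_val) (esym eq_col) desc.
by rewrite !(entry_cell_of T_perm) //; lia.
Qed.

Lemma hecke_le_SET T T' : hecke_le T T' -> is_SET T -> is_SET T'.
Proof.
elim=> // {}T T1 T2 i i_pos i_lt pi_T _ IH T_SET.
by apply/IH/(pi_op_SET T_SET _ pi_T); rewrite i_pos.
Qed.

Lemma no_descent_inversions0 T : perm_eq T (iota 1 n) ->
  (forall i, 0 < i < n -> ~~ descent T i) -> inversions T = 0.
Proof.
move=> T_perm no_desc.
have row_mono : {in [pred v | 0 < v <= n] &,
    {homo (fun v => (cell_of T v).1) : v w / v <= w}}.
  apply: homo_leq_in => [x|y x z|v w|v]; rewrite ?inE.
  - exact: leqnn.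
  - exact: leq_trans.
  - by move=> v_range w_range k k_range; rewrite ?inE /=; lia.
  - by move=> v_range; rewrite ?inE /= => v1_range; rewrite leqNgt; apply: no_desc; lia.
apply: big1_seq => c /andP[_ c_in]; apply: big1_seq => d /andP[_ d_in].
apply/eqP; rewrite eqb0; apply/negP => /andP[lt_row lt_entry].
have := row_mono _ _ (entry_range T_perm d_in) (entry_range T_perm c_in) (ltnW lt_entry).
by rewrite /= !(cell_of_entry T_perm) //; lia.
Qed.

Lemma exists_descent T : perm_eq T (iota 1 n) -> 0 < inversions T ->
  exists2 i, 0 < i < n & descent T i.
Proof.
move=> T_perm inv_pos.
case: (boolP (has (descent T) (iota 1 n.-1))) => [/hasP[i] | /hasPn no_desc].
  by rewrite mem_iota => i_range desc; exists i => //; lia.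
move: inv_pos; rewrite no_descent_inversions0 // => i i_range.
by apply: no_desc; rewrite mem_iota; lia.
Qed.

Lemma SET_inversions0_Srow T : is_SET T -> inversions T = 0 -> T = Srow a b.
Proof.
case=> T_perm T_rows _ /eqP inv0; apply: filling_eq_Srow => // c d c_in d_in.
case/orP => [lt_row | /andP[/eqP eq_row lt_col]]; last exact: T_rows.
move: inv0; rewrite sum_nat_seq_eq0 => /allP/(_ c c_in).
rewrite /= sum_nat_seq_eq0 => /allP/(_ d d_in); rewrite /= eqb0 lt_row /= -leqNgt.
rewrite leq_eqVlt => /orP[/eqP eq_cd | //].
by move: lt_row; rewrite (entry_inj T_perm c_in d_in eq_cd) ltnn.
Qed.

Lemma hecke_le_Srow T : is_SET T -> hecke_le T (Srow a b).
Proof.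
have [k] := ubnP (inversions T); elim: k T => // k IH T lt_inv T_SET.
have T_perm := SET_perm T_SET.
case: (posnP (inversions T)) => [inv0 | inv_pos].
  by rewrite -(SET_inversions0_Srow T_SET inv0); exact: hle_refl.
have [i i_range desc] := exists_descent T_perm inv_pos.
have pi_T := pi_op_descent desc.
have inv_T := inversions_swap T_perm i_range desc.
have [i_pos i_lt] := andP i_range.
apply: (hle_step i_pos i_lt pi_T); apply: IH; first lia.
exact: pi_op_SET T_SET i_range pi_T.
Qed.

Lemma SET_chain_cons T T' s : is_SET T -> hecke_lt a b T T' ->
  SET_chain a b (T' :: s) -> SET_chain a b (T :: T' :: s).
Proof.
by move=> T_SET lt_TT' [s_SET s_lt]; split=> [[|k] | [|k]] //= k_lt;
  [exact: s_SET | exact: s_lt].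
Qed.

Lemma SET_chain_exists T : is_SET T ->
  exists s, SET_chain a b (T :: s) /\ size s = inversions T.
Proof.
move inv_T: (inversions T) => k; elim: k T inv_T => [|k IH] T inv_T T_SET.
  by exists [::]; split => //; split => [[|//]|//].
have T_perm := SET_perm T_SET.
have [i i_range desc] := exists_descent T_perm ltac:(by rewrite inv_T).
have pi_T := pi_op_descent desc.
have inv_swap_T := inversions_swap T_perm i_range desc.
have [s [chain_s size_s]] := IH (swap_vals i T) ltac:(lia) (pi_op_SET T_SET i_range pi_T).
exists (swap_vals i T :: s); split; last by rewrite /= size_s.
apply: SET_chain_cons chain_s => //; split.
  by have [i_pos i_lt] := andP i_range; apply: hle_step i_pos i_lt pi_T (hle_refl _ _ _).
by move=> eq_T; move: inv_swap_T; rewrite -eq_T; lia.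
Qed.

Lemma SET_chain_size T s : SET_chain a b (T :: s) -> size s <= inversions T.
Proof.
elim: s T => // T1 s IH T [s_SET s_lt].
have [le_TT1 neq_TT1] : hecke_lt a b T T1 := s_lt 0 isT.
have T_SET : is_SET T := s_SET 0 isT.
have [_ [eq_T1 | lt_inv]] := hecke_le_inversions le_TT1 (SET_perm T_SET).
  by case: neq_TT1; rewrite eq_T1.
have := IH T1 (conj (fun k => s_SET k.+1) (fun k => s_lt k.+1)).
by rewrite /=; lia.
Qed.

Lemma inversions_Scol_add_ls :
  inversions (Scol a b) + \sum_(c <- cells a b) ls a b c = 'C(n, 2).
Proof.
pose NW (c d : cell) := (c.1 < d.1) && (d.2 < c.2).
pose SW (c d : cell) := (d != c) && (d.1 <= c.1) && (d.2 <= c.2).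
pose pairs (P : cell -> cell -> bool) :=
  \sum_(c <- cells a b) \sum_(d <- cells a b) (P c d : nat).
have pairs_sym P : pairs (fun c d => P d c) = pairs P by exact: exchange_big.
have inv_NW : inversions (Scol a b) = pairs NW.
  apply: eq_big_seq => c c_in; apply: eq_big_seq => d d_in.
  rewrite ltn_entry_Scol // /NW /col_major /row_major /=.
  by case: (ltngtP c.1 d.1); rewrite ?andbF ?orbF.
have ls_SW : \sum_(c <- cells a b) ls a b c = pairs SW.
  by apply: eq_bigr => c _; rewrite /ls -sum_bool_count.
have neq_split (c d : cell) : (c != d : nat) = NW c d + NW d c + SW c d + SW d c.
  case: c d => [c1 c2] [d1 d2]; rewrite /NW /SW /= !xpair_eqE.
  by case: (ltngtP c1 d1); case: (ltngtP c2 d2).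
have neq_pairs : pairs (fun c d => c != d)
    = pairs NW + pairs (fun c d => NW d c) + pairs SW + pairs (fun c d => SW d c).
  rewrite /pairs -!big_split; apply: eq_bigr => c _.
  by rewrite -!big_split; apply: eq_bigr => d _; exact: neq_split.
have := sum_pairs_neq (uniq_cells a b).
rewrite -/(pairs _) neq_pairs (pairs_sym NW) (pairs_sym SW) -inv_NW -ls_SW bin2 => <-.
lia.
Qed.

End StandardExtendedTableaux.

Section ConnectedShapes.

Variables a b : seq nat.
Hypothesis a_b_connected : skew_connected a b.

Local Notation n := (size (cells a b)).
Local Notation entry := (entry a b).
Local Notation pi_op := (pi_op a b).
Local Notation hecke_le := (hecke_le a b).
Local Notation is_SET := (is_SET a b).
Local Notation cell_of := (cell_of a b).
Local Notation inversions := (inversions a b).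
Local Notation descent := (descent a b).

Lemma skew_connected_climb r' j' r j :
  (r', j') \in cells a b -> (r, j) \in cells a b -> r' < r -> j' <= j ->
  exists s k, [/\ r' < s <= r, j' <= k <= j, (r', k) \in cells a b & (s, k) \in cells a b].
Proof.
rewrite !mem_cells /= => /and3P[r'_lt b_r' a_r'] /and3P[r_lt b_r a_r] lt_r'r le_j'j.
have [j_lt_ar' | ar'_le_j] := ltnP j (nth 0 a r').
  by exists r, j; rewrite !mem_cells /=; split; lia.
(* s is the lowest row above r' reaching past column j', t the nonempty row just
   below it; the overlap of rows t and s yields k = b_s if t = r', and otherwise
   shows that row t reaches past j', contradicting the choice of s. *)
pose P s := [&& r' < s, s <= r, nonempty_row a b s & j' < nth 0 a s].
have exP : exists s, P s by exists r; rewrite /P /nonempty_row; lia.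
case: (ex_minnP exP) => s /and4P[lt_r's le_sr ne_s j'_lt_as] s_min.
have [bs_le_j' | j'_lt_bs] := leqP (nth 0 b s) j'.
  by exists s, j'; rewrite !mem_cells /=; move: ne_s; rewrite /nonempty_row; split; lia.
pose Q t := [&& r' <= t, t < s & nonempty_row a b t].
have exQ : exists t, Q t by exists r'; rewrite /Q /nonempty_row; lia.
have Q_le t : Q t -> t <= s by case/and3P => _ /ltnW.
case: (ex_maxnP exQ Q_le) => t /and3P[le_r't lt_ts ne_t] t_max.
have between l : t < l < s -> ~~ nonempty_row a b l.
  by case/andP=> lt_tl lt_ls; apply/negP => ne_l; have := t_max l; rewrite /Q ne_l; lia.
have overlap := a_b_connected lt_ts ne_t ne_s between.
move: ne_t ne_s; rewrite /nonempty_row => ne_t ne_s.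
have [eq_t | lt_r't] := eqVneq t r'.
  rewrite eq_t in overlap; exists s, (nth 0 b s); rewrite !mem_cells /=; split; lia.
have := s_min t; rewrite /P /nonempty_row; lia.
Qed.

Lemma SET_leq_southwest T c d : is_SET T -> c \in cells a b -> d \in cells a b ->
  d.1 <= c.1 -> d.2 <= c.2 -> entry T d <= entry T c.
Proof.
case=> _ T_rows T_cols.
have row_leq i j j' : (i, j) \in cells a b -> (i, j') \in cells a b -> j <= j' ->
    entry T (i, j) <= entry T (i, j').
  move=> ij_in ij'_in; rewrite leq_eqVlt => /orP[/eqP -> // | lt_jj'].
  exact/ltnW/T_rows.
have [m] := ubnP (c.1 - d.1); elim: m c d => // m IH [r j] [r' j'] /= lt_m rj_in r'j'_in.
rewrite leq_eqVlt => /orP[/eqP eq_r | lt_r'r] le_j'j; first by rewrite eq_r row_leq // -eq_r.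
have [s [k [s_range k_range r'k_in sk_in]]] := skew_connected_climb r'j'_in rj_in lt_r'r le_j'j.
apply: leq_trans (row_leq _ _ _ r'j'_in r'k_in _) _; first by case/andP: k_range.
apply: leq_trans (ltnW (T_cols _ _ r'k_in sk_in erefl _)) _; first by case/andP: s_range.
by apply: IH => //=; lia.
Qed.

Lemma SET_ltn_southwest T c d : is_SET T -> c \in cells a b -> d \in cells a b ->
  d.1 <= c.1 -> d.2 <= c.2 -> d != c -> entry T d < entry T c.
Proof.
move=> T_SET c_in d_in le_row le_col neq_dc.
rewrite ltn_neqAle SET_leq_southwest // andbT.
by apply: contra neq_dc => /eqP/(entry_inj (SET_perm T_SET) d_in c_in) ->.
Qed.

Lemma SET_eq_Scol T : is_SET T ->
  (forall i, 0 < i < n -> (cell_of T i).1 < (cell_of T i.+1).1 ->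
     (cell_of T i).2 = (cell_of T i.+1).2) ->
  T = Scol a b.
Proof.
move=> T_SET ascent_col; have [T_perm _ T_cols] := T_SET.
have col_mono : {in [pred v | 0 < v <= n] &,
    {homo (fun v => (cell_of T v).2) : v w / v <= w}}.
  apply: homo_leq_in => [x|y x z|v w|v]; rewrite ?inE /=.
  - exact: leqnn.
  - exact: leq_trans.
  - by move=> v_range w_range k k_range; rewrite ?inE /=; lia.
  move=> v_range; rewrite ?inE /= => lt_vn.
  have [lt_row | le_row] := ltnP (cell_of T v).1 (cell_of T v.+1).1.
    by rewrite ascent_col //; lia.
  rewrite leqNgt; apply/negP => lt_col.
  have := SET_ltn_southwest T_SET (cell_of_in T_perm v_range)
    (cell_of_in T_perm (lt_vn : 0 < v.+1 <= n)) le_row (ltnW lt_col).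
  have neq_cells : cell_of T v.+1 != cell_of T v.
    by apply: contraTneq lt_col => ->; rewrite ltnn.
  by rewrite !(entry_cell_of T_perm) // => /(_ neq_cells); rewrite ltnNge leqnSn.
apply: filling_eq_Scol => // c d c_in d_in.
case/orP => [/= lt_col | /andP[/eqP eq_col lt_row]]; last exact: T_cols.
rewrite ltnNge leq_eqVlt negb_or; apply/andP; split.
  by apply: contraTneq lt_col => /(entry_inj T_perm d_in c_in) ->; rewrite ltnn.
apply/negP => lt_entry.
have := col_mono _ _ (entry_range T_perm d_in) (entry_range T_perm c_in) (ltnW lt_entry).
by rewrite /= !(cell_of_entry T_perm) //; lia.
Qed.

Lemma SET_ascent_step T : is_SET T -> T <> Scol a b ->
  exists2 i, 0 < i < n &
    [/\ is_SET (swap_vals i T), pi_op i (swap_vals i T) = Some T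
      & inversions (swap_vals i T) = (inversions T).+1].
Proof.
move=> T_SET T_neq; have T_perm := SET_perm T_SET.
pose ascent i :=
  ((cell_of T i).1 < (cell_of T i.+1).1) && ((cell_of T i).2 != (cell_of T i.+1).2).
have [i i_range /andP[lt_row neq_col]] : exists2 i, 0 < i < n & ascent i.
  case: (boolP (has ascent (iota 1 n.-1))) => [/hasP[i] | /hasPn no_ascent].
    by rewrite mem_iota => i_range asc; exists i => //; lia.
  case: T_neq; apply: SET_eq_Scol => // i i_range lt_row; apply/eqP.
  by move: (no_ascent i); rewrite mem_iota /ascent lt_row negbK; apply; lia.
have T'_SET : is_SET (swap_vals i T) by apply: SET_swap; rewrite // neq_ltn lt_row.
have desc : descent (swap_vals i T) i by rewrite /descent !cell_of_swap swap_val_l swap_val_r.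
exists i => //; split => //; first by rewrite pi_op_descent // swap_valsK.
by rewrite (inversions_swap (SET_perm T'_SET) i_range desc) swap_valsK.
Qed.

Lemma Scol_hecke_le T : is_SET T -> hecke_le (Scol a b) T.
Proof.
have [k] := ubnP (n * n - inversions T); elim: k T => // k IH T lt_k T_SET.
have [-> | /eqP T_neq] := eqVneq T (Scol a b); first exact: hle_refl.
have [i i_range [T'_SET pi_T' inv_T']] := SET_ascent_step T_SET T_neq.
apply: hecke_le_trans (IH _ _ T'_SET) _.
  by have := inversions_leq a b (swap_vals i T); lia.
by have [i_pos i_lt] := andP i_range; apply: hle_step i_pos i_lt pi_T' (hle_refl _ _ _).
Qed.

Lemma SET_inversions_leq_Scol T : is_SET T -> inversions T <= inversions (Scol a b).
Proof.
move=> T_SET.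
by have [_ [<- | /ltnW]] := hecke_le_inversions (Scol_hecke_le T_SET) (perm_Scol a b).
Qed.

End ConnectedShapes.

Theorem theorem4p1 (a b : seq nat) :
  is_comp a -> is_comp b -> comp_sub b a -> skew_connected a b ->
  [/\ is_minimal (is_SET a b) (hecke_le a b) (Scol a b),
      (forall T, is_minimal (is_SET a b) (hecke_le a b) T -> T = Scol a b),
      (forall T, is_SET a b T <->
         [/\ is_SIT a b T, hecke_le a b (Scol a b) T & hecke_le a b T (Srow a b)])
    & (exists r, SET_rank a b r /\
         r + \sum_(c <- cells a b) ls a b c = 'C(size (cells a b), 2))].
Proof.
move=> _ _ _ conn; split.
- split=> [|T T_SET le_T_Scol]; first exact: SET_Scol.
  exact: hecke_le_anti (SET_perm T_SET) le_T_Scol (Scol_hecke_le conn T_SET).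
- move=> T [T_SET T_min]; apply/esym/T_min; [exact: SET_Scol | exact: Scol_hecke_le].
- move=> T; split=> [T_SET | [_ le_Scol_T _]].
    by split; [exact: SET_SIT | exact: Scol_hecke_le | exact: hecke_le_Srow].
  exact: hecke_le_SET le_Scol_T (SET_Scol a b).
exists (inversions a b (Scol a b)); split; last exact: inversions_Scol_add_ls.
split=> [|[// | T s] chain_Ts].
  have [s [chain_s size_s]] := SET_chain_exists (SET_Scol a b).
  by exists (Scol a b :: s); rewrite /= size_s.
have := SET_chain_size chain_Ts; have := SET_inversions_leq_Scol conn (chain_Ts.1 0 isT).
by rewrite /=; lia.
Qed.
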